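(* Let $g\colon\mathbb X\to\mathbb Y$ be continuous, let $D\subset\mathbb Y$ be nonempty and closed, and let $\Phi\colon\mathbb X\rightrightarrows\mathbb Y$ be given by $\Phi(x):=g(x)-D$ for all $x\in\mathbb X$. Fix $(x,y)\in\operatorname{gph}\Phi$. Then: (i) For each $y^*\in\mathbb Y$, \[\widehat D^*\Phi(x,y)(y^* )\subset\begin{cases}\widehat D^*g(x)(y^* )& \text{if } y^*\in\widehat{\mathcal N}_D(g(x)-y),\\ \varnothing&\text{otherwise},\end{cases}\] and the opposite inclusion holds if $g$ is calm at $x$. (ii) For each $y^*\in\mathbb Y$, \[D^*\Phi(x,y)(y^* )\subset\begin{cases}D^*g(x)(y^* )& \text{if } y^*\in\mathcal N_D(g(x)-y),\\ \varnothing&\text{otherwise}.\end{cases}\] (iii) If $g$ is calm at $x$, then for each pair of directions $(u,v)\in\mathbb X\times\mathbb Y$ and each $y^*\in\mathbb Y$, $D^*\Phi((x,y);(u,v))(y^* )$ is contained in the union, over all $w\in Dg(x)(u)$ with $y^*\in\mathcal N_D(g(x)-y;w-v)$, of the sets $D^*g(x;(u,w))(y^* )$ (and is empty if no such $w$ exists).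
   Context: $\mathbb X,\mathbb Y$ are Euclidean spaces. For a closed set $Q$ and $\bar z\in Q$, $\widehat{\mathcal N}_Q(\bar z)=\{\eta\mid \langle\eta,z-\bar z\rangle\le o(\|z-\bar z\|)\ \forall z\in Q\}$ is the regular normal cone, $\mathcal N_Q(\bar z)$ the limiting normal cone (limits of $\eta_k\in\widehat{\mathcal N}_Q(z_k)$ with $Q\ni z_k\to\bar z$); both are empty for $\bar z\notin Q$. For a direction $w$, the directional limiting normal cone $\mathcal N_Q(\bar z;w)$ is the set of all $\eta$ for which there exist $w_k\to w$, $t_k\searrow0$, $\eta_k\to\eta$ with $\eta_k\in\widehat{\mathcal N}_Q(\bar z+t_kw_k)$ for all $k$. For a set-valued map $\Psi$ with closed graph and $(\bar x,\bar y)\in\operatorname{gph}\Psi$: $\widehat D^*\Psi(\bar x,\bar y)(y^* )=\{x^*\mid(x^*,-y^* )\in\widehat{\mathcal N}_{\operatorname{gph}\Psi}(\bar x,\bar y)\}$ (regular coderivative), $D^*\Psi(\bar x,\bar y)(y^* )=\{x^*\mid(x^*,-y^* )\in\mathcal N_{\operatorname{gph}\Psi}(\bar x,\bar y)\}$ (limiting coderivative), and $D^*\Psi((\bar x,\bar y);(u,v))(y^* )=\{x^*\mid(x^*,-y^* )\in\mathcal N_{\operatorname{gph}\Psi}((\bar x,\bar y);(u,v))\}$ (directional limiting coderivative). For single-valued $g$ one writes $\widehat D^*g(x)$, $D^*g(x)$, $D^*g(x;(u,w))$. The graphical derivative $Dg(x)(u)$ is the set of $w$ with $(u,w)$ in the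 (Bouligand) tangent cone to $\operatorname{gph}g$ at $(x,g(x))$. $g$ is calm at $x$ if there are a neighbourhood $U$ of $x$ and $L>0$ with $\|g(x')-g(x)\|\le L\|x'-x\|$ for all $x'\in U$. *)

(* X = 'rV[R]_n, Y = 'rV[R]_m with the standard
   Euclidean inner product; X x Y is identified with 'rV[R]_(n + m) via row_mx
   (whose standard inner product is the sum of the two inner products). *)
From HB Require Import structures.
From mathcomp Require Import all_boot all_order all_algebra.
From mathcomp Require Import all_classical all_reals all_analysis.
Set Implicit Arguments. Unset Strict Implicit. Unset Printing Implicit Defensive.
Import Order.TTheory GRing.Theory Num.Theory.
Import numFieldNormedType.Exports.
Local Open Scope classical_set_scope.
Local Open Scope ring_scope.

Definition dotv {R : realType} {n : nat} (u v : 'rV[R]_n) : R :=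
  \sum_(i < n) u ord0 i * v ord0 i.
Definition enorm {R : realType} {n : nat} (u : 'rV[R]_n) : R :=
  Num.sqrt (dotv u u).

Definition rnormal {R : realType} {n : nat} (Q : set 'rV[R]_n) (zb : 'rV[R]_n)
  : set 'rV[R]_n :=
  [set eta | Q zb /\
    forall eps : R, 0 < eps -> exists2 delta : R, 0 < delta &
      forall z, Q z -> enorm (z - zb) < delta ->
        dotv eta (z - zb) <= eps * enorm (z - zb)].

Definition lnormal {R : realType} {n : nat} (Q : set 'rV[R]_n) (zb : 'rV[R]_n)
  : set 'rV[R]_n :=
  [set eta | exists (z_ eta_ : nat -> 'rV[R]_n),
    (forall k, rnormal Q (z_ k) (eta_ k)) /\
    z_ @ \oo --> zb /\ eta_ @ \oo --> eta].

Definition dlnormal {R : realType} {n : nat} (Q : set 'rV[R]_n)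
  (zb w : 'rV[R]_n) : set 'rV[R]_n :=
  [set eta | exists (t_ : nat -> R) (w_ eta_ : nat -> 'rV[R]_n),
    (forall k, 0 < t_ k) /\ t_ @ \oo --> (0 : R) /\
    w_ @ \oo --> w /\ eta_ @ \oo --> eta /\
    (forall k, rnormal Q (zb + t_ k *: w_ k) (eta_ k))].

Definition tangent {R : realType} {n : nat} (Q : set 'rV[R]_n) (zb : 'rV[R]_n)
  : set 'rV[R]_n :=
  [set d | exists (t_ : nat -> R) (d_ : nat -> 'rV[R]_n),
    (forall k, 0 < t_ k) /\ t_ @ \oo --> (0 : R) /\
    d_ @ \oo --> d /\ (forall k, Q (zb + t_ k *: d_ k))].

Definition gph {R : realType} {n m : nat} (Psi : 'rV[R]_n -> set 'rV[R]_m)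
  : set 'rV[R]_(n + m) :=
  [set z | exists x y, Psi x y /\ z = row_mx x y].

Definition sv {R : realType} {n m : nat} (g : 'rV[R]_n -> 'rV[R]_m)
  : 'rV[R]_n -> set 'rV[R]_m := fun x => [set g x].

Definition rcoder {R : realType} {n m : nat} (Psi : 'rV[R]_n -> set 'rV[R]_m)
  (x : 'rV[R]_n) (y ys : 'rV[R]_m) : set 'rV[R]_n :=
  [set xs | rnormal (gph Psi) (row_mx x y) (row_mx xs (- ys))].
Definition lcoder {R : realType} {n m : nat} (Psi : 'rV[R]_n -> set 'rV[R]_m)
  (x : 'rV[R]_n) (y ys : 'rV[R]_m) : set 'rV[R]_n :=
  [set xs | lnormal (gph Psi) (row_mx x y) (row_mx xs (- ys))].
Definition dcoder {R : realType} {n m : nat} (Psi : 'rV[R]_n -> set 'rV[R]_m)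
  (x : 'rV[R]_n) (y : 'rV[R]_m) (u : 'rV[R]_n) (v ys : 'rV[R]_m)
  : set 'rV[R]_n :=
  [set xs | dlnormal (gph Psi) (row_mx x y) (row_mx u v) (row_mx xs (- ys))].

Definition gderiv {R : realType} {n m : nat} (g : 'rV[R]_n -> 'rV[R]_m)
  (x u : 'rV[R]_n) : set 'rV[R]_m :=
  [set w | tangent (gph (sv g)) (row_mx x (g x)) (row_mx u w)].

Definition calm {R : realType} {n m : nat} (g : 'rV[R]_n -> 'rV[R]_m)
  (x : 'rV[R]_n) : Prop :=
  exists2 delta : R, 0 < delta & exists2 L : R, 0 < L &
    forall x', enorm (x' - x) < delta -> enorm (g x' - g x) <= L * enorm (x' - x).

(* The graph of Phi is {(x, g x - d) | d in D}.  Moving x with d fixed traces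
   the graph of g, and moving d with x fixed traces D, so a regular normal
   (xs, -ys) to gph Phi at (x, g x - d0) is a regular normal to gph g at
   (x, g x), and ys is a regular normal to D at d0.  Conversely, if g is calm
   at x, the displacement (x' - x, (g x' - d) - (g x - d0)) controls both the
   graph displacement (x' - x, g x' - g x) and d - d0, so the two normal
   inequalities add up.  The limiting and directional statements pass these
   facts to the limit; in the directional case calmness bounds the difference
   quotients (g (x + t u) - g x) / t, and a convergent subsequence of them
   produces the direction w in Dg(x)(u). *)

From HB Require Import structures.
From mathcomp Require Import all_boot all_order all_algebra.
From mathcomp Require Import all_classical all_reals all_analysis.
From mathcomp Require Import ring lra.
Import Order.TTheory GRing.Theory Num.Theory.
Import numFieldNormedType.Exports.
Local Open Scope classical_set_scope.
Local Open Scope ring_scope.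

Ltac rowring := apply/rowP => ?; rewrite !mxE; ring.

Section euclidean_norm.
Context {R : realType}.

Lemma dotv_row_mx {n1 n2 : nat} (a c : 'rV[R]_n1) (b d : 'rV[R]_n2) :
  dotv (row_mx a b) (row_mx c d) = dotv a c + dotv b d.
Proof.
rewrite /dotv big_split_ord /=; congr (_ + _); apply: eq_bigr => i _;
  by rewrite ?row_mxEl ?row_mxEr.
Qed.

Lemma dotvDr {n : nat} (u v w : 'rV[R]_n) : dotv u (v + w) = dotv u v + dotv u w.
Proof. by rewrite /dotv -big_split; apply: eq_bigr => i _; rewrite mxE mulrDr. Qed.

Lemma dotvNr {n : nat} (u v : 'rV[R]_n) : dotv u (- v) = - dotv u v.
Proof. by rewrite /dotv -sumrN; apply: eq_bigr => i _; rewrite mxE mulrN. Qed.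

Lemma dotvNl {n : nat} (u v : 'rV[R]_n) : dotv (- u) v = - dotv u v.
Proof. by rewrite /dotv -sumrN; apply: eq_bigr => i _; rewrite mxE mulNr. Qed.

Lemma dotv0r {n : nat} (u : 'rV[R]_n) : dotv u 0 = 0.
Proof. by rewrite /dotv big1 // => i _; rewrite mxE mulr0. Qed.

Lemma dotvZZ {n : nat} (c : R) (u v : 'rV[R]_n) :
  dotv (c *: u) (c *: v) = c ^+ 2 * dotv u v.
Proof. by rewrite /dotv mulr_sumr; apply: eq_bigr => i _; rewrite !mxE; ring. Qed.

Lemma dotvv_ge0 {n : nat} (u : 'rV[R]_n) : 0 <= dotv u u.
Proof. by rewrite /dotv sumr_ge0 // => i _; rewrite -expr2 sqr_ge0. Qed.

Lemma enorm_ge0 {n : nat} (u : 'rV[R]_n) : 0 <= enorm u.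
Proof. exact: sqrtr_ge0. Qed.

Lemma enormZ {n : nat} (c : R) (u : 'rV[R]_n) : enorm (c *: u) = `|c| * enorm u.
Proof. by rewrite /enorm dotvZZ sqrtrM ?sqr_ge0 // sqrtr_sqr. Qed.

Lemma enormN {n : nat} (u : 'rV[R]_n) : enorm (- u) = enorm u.
Proof. by rewrite -scaleN1r enormZ normrN normr1 mul1r. Qed.

Lemma enorm_row_mxl {n1 n2 : nat} (a : 'rV[R]_n1) (b : 'rV[R]_n2) :
  enorm a <= enorm (row_mx a b).
Proof.
rewrite /enorm dotv_row_mx ler_sqrt; last by rewrite addr_ge0 ?dotvv_ge0.
by rewrite lerDl dotvv_ge0.
Qed.

Lemma enorm_row_mxr {n1 n2 : nat} (a : 'rV[R]_n1) (b : 'rV[R]_n2) :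
  enorm b <= enorm (row_mx a b).
Proof.
rewrite /enorm dotv_row_mx ler_sqrt; last by rewrite addr_ge0 ?dotvv_ge0.
by rewrite lerDr dotvv_ge0.
Qed.

Lemma enorm_row_mx_le {n1 n2 : nat} (a : 'rV[R]_n1) (b : 'rV[R]_n2) :
  enorm (row_mx a b) <= enorm a + enorm b.
Proof.
have h0 : 0 <= enorm a + enorm b by rewrite addr_ge0 ?enorm_ge0.
rewrite -(ger0_norm h0) -sqrtr_sqr /enorm dotv_row_mx ler_sqrt ?sqr_ge0 //.
rewrite sqrrD !sqr_sqrtr ?dotvv_ge0 // -addrA lerD2l lerDr.
by rewrite mulrn_wge0 // mulr_ge0 // sqrtr_ge0.
Qed.

Lemma enorm_row0mx {n1 n2 : nat} (b : 'rV[R]_n2) :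
  enorm (row_mx (0 : 'rV[R]_n1) b) = enorm b.
Proof. by rewrite /enorm dotv_row_mx dotv0r add0r. Qed.

Lemma normr_entry_le {n : nat} (z : 'rV[R]_n) i : `|z ord0 i| <= `|z|.
Proof.
rewrite [`|z|]mx_normrE.
exact: (@le_bigmax _ _ _ 0 (fun ij : 'I_1 * 'I_n => `|z ij.1 ij.2|) (ord0, i)).
Qed.

Lemma normr_le_enorm {n : nat} (z : 'rV[R]_n) : `|z| <= enorm z.
Proof.
rewrite [`|z|]mx_normrE; apply: bigmax_le => [|[i j] _]; first exact: enorm_ge0.
rewrite /= (ord1 i) -sqrtr_sqr /enorm ler_sqrt ?dotvv_ge0 //.
rewrite /dotv (bigD1 j) //= -expr2 lerDl.
by rewrite sumr_ge0 // => k _; rewrite -expr2 sqr_ge0.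
Qed.

Lemma enorm_le_normr {n : nat} (z : 'rV[R]_n) : enorm z <= n%:R * `|z|.
Proof.
have h0 : 0 <= n%:R * `|z| by rewrite mulr_ge0.
rewrite -(ger0_norm h0) -sqrtr_sqr /enorm ler_sqrt ?sqr_ge0 //.
apply: (@le_trans _ _ (\sum_(i < n) `|z| ^+ 2)).
  apply: ler_sum => i _; rewrite -expr2 -real_normK ?num_real //.
  by rewrite lerXn2r ?nnegrE // normr_entry_le.
rewrite sumr_const card_ord -[X in X <= _]mulr_natl exprMn ler_wpM2r ?sqr_ge0 //.
by rewrite -natrX ler_nat; case: (n) => // k; rewrite expnS expn1 leq_pmulr.
Qed.

(* Through the max norm, at the cost of the factor [m]. *)
Lemma enormB_le {m : nat} (u v : 'rV[R]_m) :
  enorm (u - v) <= m%:R * (enorm u + enorm v).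
Proof.
apply: le_trans (enorm_le_normr _) _; rewrite ler_wpM2l //.
by apply: le_trans (ler_normB _ _) _; apply: lerD; apply: normr_le_enorm.
Qed.

Lemma enorm_graph_step_le {n m : nat} (L : R) (a : 'rV[R]_n) (b s : 'rV[R]_m) :
  0 <= L -> enorm b <= L * enorm a ->
  enorm (row_mx a b) <= (m%:R + 1) * (L + 1) * enorm (row_mx a s) /\
  enorm (b - s) <= (m%:R + 1) * (L + 1) * enorm (row_mx a s).
Proof.
move=> L0 hb; set r := enorm (row_mx a s).
have ha : enorm a <= r := enorm_row_mxl a s.
have hs : enorm s <= r := enorm_row_mxr a s.
have hm : 0 <= (m%:R : R) by [].
have r0 : 0 <= r := enorm_ge0 _.
have hLr : enorm b <= L * r by apply: le_trans hb _; rewrite ler_wpM2l.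
have hK : (L + 1) * r <= (m%:R + 1) * (L + 1) * r.
  by rewrite -mulrA ler_peMl ?mulr_ge0 ?addr_ge0 // lerDr.
split.
  by apply: le_trans (enorm_row_mx_le a b) (le_trans _ hK); lra.
apply: le_trans (enormB_le b s) _; rewrite -mulrA ler_pM // ?addr_ge0 ?enorm_ge0 //.
  by rewrite lerDl.
lra.
Qed.

End euclidean_norm.

Section row_sequences.
Context {R : realType}.

Lemma cvg_row_mx {n1 n2 : nat} {a_ : nat -> 'rV[R]_n1} {b_ : nat -> 'rV[R]_n2}
    {a : 'rV[R]_n1} {b : 'rV[R]_n2} :
  a_ @ \oo --> a -> b_ @ \oo --> b ->
  (fun k => row_mx (a_ k) (b_ k)) @ \oo --> row_mx a b.
Proof.
move=> /cvgrPdist_lt Ha /cvgrPdist_lt Hb; apply/cvgrPdist_lt => e e0; near=> k.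
rewrite [`|_|]mx_normrE; apply: bigmax_lt => // -[i j] _ /=.
rewrite opp_row_mx add_row_mx (ord1 i) mxE; case: splitP => j' _.
  by apply: le_lt_trans (normr_entry_le _ j') _; near: k; exact: Ha.
by apply: le_lt_trans (normr_entry_le _ j') _; near: k; exact: Hb.
Unshelve. all: by end_near.
Qed.

Lemma cvg_lsubmx {n1 n2 : nat} {z_ : nat -> 'rV[R]_(n1 + n2)}
    {a : 'rV[R]_n1} {b : 'rV[R]_n2} :
  z_ @ \oo --> row_mx a b -> (lsubmx \o z_) @ \oo --> a.
Proof.
move=> Hz; have := continuous_cvg _ (@continuous_lsubmx R 1 n1 n2 (row_mx a b)) Hz.
by rewrite row_mxKl; apply.
Qed.

Lemma cvg_rsubmx {n1 n2 : nat} {z_ : nat -> 'rV[R]_(n1 + n2)}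
    {a : 'rV[R]_n1} {b : 'rV[R]_n2} :
  z_ @ \oo --> row_mx a b -> (rsubmx \o z_) @ \oo --> b.
Proof.
move=> Hz; have := continuous_cvg _ (@continuous_rsubmx R 1 n1 n2 (row_mx a b)) Hz.
by rewrite row_mxKr; apply.
Qed.

Lemma cvg_subseq {T : topologicalType} {s : nat -> T} {l : T} {f : nat -> nat} :
  increasing_seq f -> s @ \oo --> l -> (s \o f) @ \oo --> l.
Proof.
move=> /increasing_seqP Hf Hs.
have f_ge k : (k <= f k)%N by elim: k => // k IH; exact: leq_ltn_trans IH (Hf k).
apply: cvg_comp Hs => A [N _ HA]; exists N => // k /= Hk; apply: HA => /=.
exact: leq_trans Hk (f_ge k).
Qed.

Lemma cluster_cvg_subseq (V : normedModType R) (q : nat -> V) (p : V) :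
  cluster (q @ \oo) p ->
  exists2 f : nat -> nat, increasing_seq f & (q \o f) @ \oo --> p.
Proof.
move=> Hcl.
have near_after N k : exists j, (N < j)%N /\ `|p - q j| < k.+1%:R^-1.
  have HA : (q @ \oo) [set z | exists j, (N < j)%N /\ z = q j].
    by exists N.+1 => // j /= Hj; exists j.
  have Hball : nbhs p (ball p k.+1%:R^-1) by exact: nbhsx_ballx.
  have [z [[j [Hj ->]] Hb]] := Hcl _ _ HA Hball.
  by exists j; split => //; rewrite -ball_normE in Hb.
pose pick N k := projT1 (cid (near_after N k)).
have pickP N k : (N < pick N k)%N /\ `|p - q (pick N k)| < k.+1%:R^-1.
  exact: projT2 (cid (near_after N k)).
pose f := fix F k := if k is k'.+1 then pick (F k') k else pick 0%N 0%N.
exists f; first by apply/increasing_seqP => k; exact: (pickP _ _).1.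
have f_near k : `|p - q (f k)| < k.+1%:R^-1 by case: k => [|k]; exact: (pickP _ _).2.
apply/cvgrPdist_lt => e e0.
by apply: filterS (near_infty_natSinv_lt (PosNum e0)) => k /=; exact: lt_trans.
Qed.

Lemma bounded_cvg_subseq {m : nat} {q : nat -> 'rV[R]_m} {M : R} :
  (\forall k \near \oo, `|q k| <= M) ->
  exists (p : 'rV[R]_m),
    exists2 f : nat -> nat, increasing_seq f & (q \o f) @ \oo --> p.
Proof.
move=> qM.
have cball : compact (closed_ball_ Num.norm (0 : 'rV[R]_m) M).
  apply: bounded_closed_compact; last exact: closed_closed_ball_.
  exists M; split; first exact: num_real.
  move=> r Mr z; rewrite /closed_ball_ /= sub0r normrN => h.
  exact: le_trans h (ltW Mr).
have qB : \forall k \near \oo, closed_ball_ Num.norm (0 : 'rV[R]_m) M (q k).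
  by apply: filterS qM => k; rewrite /closed_ball_ /= sub0r normrN.
have [p [_ Hcl]] := cball (q @ \oo) _ qB.
by exists p; exact: cluster_cvg_subseq.
Qed.

End row_sequences.

Lemma calm_diff_quotient_bounded {R : realType} {n m : nat}
    {g : 'rV[R]_n -> 'rV[R]_m} {x u : 'rV[R]_n} {t_ : nat -> R}
    {u_ : nat -> 'rV[R]_n} :
  calm g x -> (forall k, 0 < t_ k) -> t_ @ \oo --> 0 -> u_ @ \oo --> u ->
  exists M : R, \forall k \near \oo,
    `|(t_ k)^-1 *: (g (x + t_ k *: u_ k) - g x)| <= M.
Proof.
move=> [dc dc0 [L L0 Hc]] t_gt0 t_0 u_u.
have tu_0 : (fun k => t_ k *: u_ k) @ \oo --> (0 : 'rV[R]_n).
  by have := cvgZ t_0 u_u; rewrite scale0r; apply.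
have hn : 0 <= (n%:R : R) by [].
have tu_small : \forall k \near \oo, n%:R * `|t_ k *: u_ k| < dc.
  have e0 : 0 < dc / (n%:R + 1) by rewrite divr_gt0 //; lra.
  move/cvgrPdist_lt: tu_0 => /(_ _ e0); apply: filterS => k.
  rewrite sub0r normrN ltr_pdivlMr; last by lra.
  by have := normr_ge0 (t_ k *: u_ k); nra.
have u_bnd : \forall k \near \oo, `|u_ k| <= `|u| + 1.
  move/cvgrPdist_lt: u_u => /(_ 1 ltr01); apply: filterS => k h.
  have -> : u_ k = u - (u - u_ k) by rowring.
  by apply: le_trans (ler_normB _ _) _; lra.
exists (L * (n%:R * (`|u| + 1))); near=> k.
have tk := t_gt0 k.
have step : enorm (x + t_ k *: u_ k - x) = t_ k * enorm (u_ k).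
  by rewrite addrC addKr enormZ gtr0_norm.
have calm_k : enorm (g (x + t_ k *: u_ k) - g x) <= L * (t_ k * enorm (u_ k)).
  rewrite -step; apply: Hc; apply: le_lt_trans (enorm_le_normr _) _.
  by rewrite addrC addKr; near: k.
apply: le_trans (normr_le_enorm _) _.
rewrite enormZ gtr0_norm ?invr_gt0 // ler_pdivrMl //.
apply: le_trans calm_k _.
rewrite mulrCA ler_pM2l //; apply: ler_wpM2l; first exact: ltW.
apply: le_trans (enorm_le_normr _) _; rewrite ler_wpM2l //; near: k.
exact: u_bnd.
Unshelve. all: by end_near.
Qed.

Section shifted_graph.
Context {R : realType} {n m : nat}.
Variables (g : 'rV[R]_n -> 'rV[R]_m) (D : set 'rV[R]_m).
Variable Phi : 'rV[R]_n -> set 'rV[R]_m.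
Hypothesis PhiE : forall x', Phi x' = [set g x' - d | d in D].

Lemma rnormal_gph_Phi_D {x : 'rV[R]_n} {y : 'rV[R]_m} {e : 'rV[R]_(n + m)} :
  Phi x y -> rnormal (gph Phi) (row_mx x y) e -> rnormal D (g x - y) (- rsubmx e).
Proof.
rewrite -[e]hsubmxK row_mxKr PhiE => -[d0 Dd0 <-] [_ He].
have -> : g x - (g x - d0) = d0 by rowring.
split => // eps eps0; have [del del0 H] := He eps eps0.
exists del => // d Dd Hd.
have step : row_mx x (g x - d) - row_mx x (g x - d0) = row_mx 0 (- (d - d0)).
  by rewrite opp_row_mx add_row_mx; congr row_mx; rowring.
have := H (row_mx x (g x - d)).
rewrite step enorm_row0mx enormN dotv_row_mx dotv0r add0r dotvNr -dotvNl.
by apply => //; exists x, (g x - d); split => //; rewrite PhiE; exists d.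
Qed.

Lemma rnormal_gph_Phi_sv {x : 'rV[R]_n} {y : 'rV[R]_m} {e : 'rV[R]_(n + m)} :
  Phi x y -> rnormal (gph Phi) (row_mx x y) e ->
  rnormal (gph (sv g)) (row_mx x (g x)) e.
Proof.
rewrite PhiE => -[d0 Dd0 <-] [_ He].
split; first by exists x, (g x).
move=> eps eps0; have [del del0 H] := He eps eps0.
exists del => // _ [x' [_ [-> ->]]].
have step : row_mx x' (g x' - d0) - row_mx x (g x - d0) =
            row_mx x' (g x') - row_mx x (g x).
  by rewrite !opp_row_mx !add_row_mx; congr row_mx; rowring.
rewrite -step; apply: H.
by exists x', (g x' - d0); split => //; rewrite PhiE; exists d0.
Qed.

Lemma rnormal_gph_Phi_calm (x xs : 'rV[R]_n) (y ys : 'rV[R]_m) :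
  Phi x y -> calm g x -> rnormal D (g x - y) ys ->
  rnormal (gph (sv g)) (row_mx x (g x)) (row_mx xs (- ys)) ->
  rnormal (gph Phi) (row_mx x y) (row_mx xs (- ys)).
Proof.
rewrite PhiE => -[d0 Dd0 <-] [dc dc0 [L L0 Hc]].
have -> : g x - (g x - d0) = d0 by rowring.
move=> [_ HD] [_ HG].
split; first by exists x, (g x - d0); split => //; rewrite PhiE; exists d0.
move=> eps eps0.
pose K := (m%:R + 1) * (L + 1).
have K0 : 0 < K by rewrite mulr_gt0 // ltr_wpDl // ltW.
pose eps' := eps / (2 * K).
have eps'0 : 0 < eps' by rewrite divr_gt0 // mulr_gt0.
have [d1 d10 H1] := HG eps' eps'0.
have [d2 d20 H2] := HD eps' eps'0.
exists (Num.min dc (Num.min (d1 / K) (d2 / K))); first by rewrite !lt_min dc0 !divr_gt0.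
move=> _ [x' [y' [+ ->]]]; rewrite PhiE => -[d Dd <-].
rewrite opp_row_mx add_row_mx !lt_min => /and3P[r_dc r_d1 r_d2].
set a := x' - x in r_dc r_d1 r_d2 *; set s := g x' - d - (g x - d0) in r_d1 r_d2 *.
set r := enorm (row_mx a s) in r_dc r_d1 r_d2 *; set b := g x' - g x.
have [ab_le bs_le] : enorm (row_mx a b) <= K * r /\ enorm (b - s) <= K * r.
  apply: enorm_graph_step_le (ltW L0) _; apply: Hc.
  exact: le_lt_trans (enorm_row_mxl a s) r_dc.
have bsE : b - s = d - d0 by rowring.
have graph_ineq : dotv (row_mx xs (- ys)) (row_mx a b) <= eps' * enorm (row_mx a b).
  have := H1 (row_mx x' (g x')); rewrite opp_row_mx add_row_mx; apply.
    by exists x', (g x').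
  by apply: le_lt_trans ab_le _; rewrite mulrC -ltr_pdivlMr.
have D_ineq : dotv ys (d - d0) <= eps' * enorm (d - d0).
  apply: H2 => //; rewrite -bsE.
  by apply: le_lt_trans bs_le _; rewrite mulrC -ltr_pdivlMr.
have sE : s = b - (d - d0) by rewrite -bsE opprB addrC subrK.
rewrite !dotv_row_mx dotvNl in graph_ineq *; rewrite sE dotvDr dotvNr !dotvNl opprK.
have : eps' * enorm (row_mx a b) <= eps' * (K * r) by rewrite ler_pM2l.
have : eps' * enorm (d - d0) <= eps' * (K * r) by rewrite -bsE ler_pM2l.
have -> : eps' * (K * r) = eps * r / 2 by rewrite /eps'; field; rewrite gt_eqF.
lra.
Qed.

Lemma rcoder_Phi_sub (x : 'rV[R]_n) (y ys : 'rV[R]_m) : Phi x y ->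
  rcoder Phi x y ys `<=`
    [set xs | rnormal D (g x - y) ys /\ rcoder (sv g) x (g x) ys xs].
Proof.
move=> Phixy xs normal; split; last exact: rnormal_gph_Phi_sv Phixy normal.
by have := rnormal_gph_Phi_D Phixy normal; rewrite row_mxKr opprK.
Qed.

Lemma rcoder_Phi_sup (x : 'rV[R]_n) (y ys : 'rV[R]_m) : Phi x y -> calm g x ->
  [set xs | rnormal D (g x - y) ys /\ rcoder (sv g) x (g x) ys xs]
    `<=` rcoder Phi x y ys.
Proof. by move=> Phixy calm_gx xs [??]; exact: rnormal_gph_Phi_calm. Qed.

Lemma lcoder_Phi_sub (x : 'rV[R]_n) (y ys : 'rV[R]_m) : continuous g ->
  lcoder Phi x y ys `<=`
    [set xs | lnormal D (g x - y) ys /\ lcoder (sv g) x (g x) ys xs].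
Proof.
move=> g_cont xs [z_ [e_ [normal_k [z_xy e_e]]]].
pose x_ k := lsubmx (z_ k); pose y_ k := rsubmx (z_ k).
have Phi_k k : Phi (x_ k) (y_ k).
  rewrite /x_ /y_; case: (normal_k k) => -[x' [y' [+ ->]]] _.
  by rewrite row_mxKl row_mxKr.
have normal_k' k : rnormal (gph Phi) (row_mx (x_ k) (y_ k)) (e_ k).
  by rewrite hsubmxK.
have x_x : x_ @ \oo --> x := cvg_lsubmx z_xy.
have gx_gx : (g \o x_) @ \oo --> g x by apply: continuous_cvg; [exact: g_cont|].
split.
  exists (fun k => g (x_ k) - y_ k), (fun k => - rsubmx (e_ k)); split.
    by move=> k; exact: rnormal_gph_Phi_D.
  split; first exact: cvgB gx_gx (cvg_rsubmx z_xy).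
  by rewrite -[ys]opprK; exact: cvgN (cvg_rsubmx e_e).
exists (fun k => row_mx (x_ k) (g (x_ k))), e_; split.
  by move=> k; exact: rnormal_gph_Phi_sv.
by split => //; exact: cvg_row_mx.
Qed.

Lemma dcoder_Phi_sub (x u : 'rV[R]_n) (y v ys : 'rV[R]_m) : calm g x ->
  dcoder Phi x y u v ys `<=`
    [set xs | exists w : 'rV[R]_m, gderiv g x u w /\
                dlnormal D (g x - y) (w - v) ys /\
                dcoder (sv g) x (g x) u w ys xs].
Proof.
move=> calm_gx xs [t_ [w_ [e_ [t_gt0 [t_0 [w_uv [e_e normal_k]]]]]]].
pose u_ k := lsubmx (w_ k); pose v_ k := rsubmx (w_ k).
have stepE k : row_mx x y + t_ k *: w_ k = row_mx (x + t_ k *: u_ k) (y + t_ k *: v_ k).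
  by rewrite -{1}[w_ k]hsubmxK scale_row_mx add_row_mx.
have Phi_k k : Phi (x + t_ k *: u_ k) (y + t_ k *: v_ k).
  case: (normal_k k) => -[x' [y' [Phi_xy']]]; rewrite stepE => /eq_row_mx[-> ->] _.
  exact: Phi_xy'.
have normal_k' k :
    rnormal (gph Phi) (row_mx (x + t_ k *: u_ k) (y + t_ k *: v_ k)) (e_ k).
  by rewrite -stepE.
have u_u : u_ @ \oo --> u := cvg_lsubmx w_uv.
pose q_ k := (t_ k)^-1 *: (g (x + t_ k *: u_ k) - g x).
have gE k : g (x + t_ k *: u_ k) = g x + t_ k *: q_ k.
  by rewrite /q_ scalerA mulfV ?gt_eqF // scale1r addrCA subrr addr0.
have [M q_bnd] := calm_diff_quotient_bounded calm_gx t_gt0 t_0 u_u.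
have [w [f f_incr q_w]] := bounded_cvg_subseq q_bnd.
have t_f0 : (t_ \o f) @ \oo --> 0 := cvg_subseq f_incr t_0.
pose d_ k := row_mx (u_ (f k)) (q_ (f k)).
have d_uw : d_ @ \oo --> row_mx u w := cvg_row_mx (cvg_subseq f_incr u_u) q_w.
have graphE k : row_mx x (g x) + t_ (f k) *: d_ k =
    row_mx (x + t_ (f k) *: u_ (f k)) (g (x + t_ (f k) *: u_ (f k))).
  by rewrite scale_row_mx add_row_mx gE.
exists w; split; [|split].
- exists (t_ \o f), d_; split => [k|]; first exact: t_gt0.
  do 2!split => //; move=> k; rewrite graphE.
  by exists (x + t_ (f k) *: u_ (f k)), (g (x + t_ (f k) *: u_ (f k))).
- exists (t_ \o f), (fun k => q_ (f k) - v_ (f k)), (fun k => - rsubmx (e_ (f k))).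
  split => [k|]; first exact: t_gt0.
  split => //; split; first exact: cvgB q_w (cvg_subseq f_incr (cvg_rsubmx w_uv)).
  split; first by rewrite -[ys]opprK; exact: cvgN (cvg_subseq f_incr (cvg_rsubmx e_e)).
  move=> k; have := rnormal_gph_Phi_D (Phi_k (f k)) (normal_k' (f k)); rewrite gE.
  suff -> : g x + t_ (f k) *: q_ (f k) - (y + t_ (f k) *: v_ (f k)) =
            g x - y + t_ (f k) *: (q_ (f k) - v_ (f k)) by [].
  by rowring.
- exists (t_ \o f), d_, (e_ \o f); split => [k|]; first exact: t_gt0.
  do 3!split => //; first exact: cvg_subseq.
  move=> k; rewrite /= graphE.
  exact: rnormal_gph_Phi_sv (Phi_k (f k)) (normal_k' (f k)).
Qed.

End shifted_graph.

Theorem mainTheorem1 (R : realType) (n m : nat)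
  (g : 'rV[R]_n -> 'rV[R]_m) (D : set 'rV[R]_m)
  (Phi : 'rV[R]_n -> set 'rV[R]_m) (x : 'rV[R]_n) (y : 'rV[R]_m) :
  continuous g -> D !=set0 -> closed D ->
  (forall x', Phi x' = [set g x' - d | d in D]) ->
  Phi x y ->
  (* (i) *)
  (forall ys : 'rV[R]_m,
     rcoder Phi x y ys `<=`
       [set xs | rnormal D (g x - y) ys /\ rcoder (sv g) x (g x) ys xs]) /\
  (calm g x -> forall ys : 'rV[R]_m,
     [set xs | rnormal D (g x - y) ys /\ rcoder (sv g) x (g x) ys xs]
       `<=` rcoder Phi x y ys) /\
  (* (ii) *)
  (forall ys : 'rV[R]_m,
     lcoder Phi x y ys `<=`
       [set xs | lnormal D (g x - y) ys /\ lcoder (sv g) x (g x) ys xs]) /\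
  (* (iii) *)
  (calm g x -> forall (u : 'rV[R]_n) (v ys : 'rV[R]_m),
     dcoder Phi x y u v ys `<=`
       [set xs | exists w : 'rV[R]_m, gderiv g x u w /\
                   dlnormal D (g x - y) (w - v) ys /\
                   dcoder (sv g) x (g x) u w ys xs]).
Proof.
move=> g_cont _ _ PhiE Phixy.
split; first by move=> ys; exact: rcoder_Phi_sub.
split; first by move=> calm_gx ys; exact: rcoder_Phi_sup.
split; first by move=> ys; exact: lcoder_Phi_sub.
by move=> calm_gx u v ys; exact: dcoder_Phi_sub.
Qed.
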